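(* Let $\mathcal{E}$ be a finite-dimensional complex regular evolution algebra of dimension greater than one. Then $\mathcal{E}$ is not complete.
   Context: An evolution algebra over $\mathbb{C}$ is a $\mathbb{C}$-algebra $\mathcal{E}$ admitting a basis $\{e_1,\dots,e_n\}$ (a natural basis) such that $e_ie_j=0$ for all $i\neq j$. $\mathcal{E}$ is regular (perfect) if $\mathcal{E}=\mathcal{E}^2$, equivalently the structure matrix $(a_{ij})$ defined by $e_i^2=\sum_j a_{ij}e_j$ (relative to any natural basis) is invertible. $\mathcal{E}$ is complete if every subalgebra of $\mathcal{E}$ admits a natural basis (i.e. a basis whose distinct elements have zero product) which can be extended to a natural basis of $\mathcal{E}$. *)

From HB Require Import structures.
From mathcomp Require Import all_boot all_order all_algebra.
From mathcomp Require Import complex.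
From mathcomp Require Import reals.
Set Implicit Arguments. Unset Strict Implicit. Unset Printing Implicit Defensive.
Import Order.TTheory GRing.Theory Num.Theory.
Local Open Scope ring_scope.


Section EvolutionAlgebras.
Variables (K : fieldType) (V : vectType K).

Definition bilinear_mul (mul : V -> V -> V) : Prop :=
  (forall (a : K) (x y z : V), mul (a *: x + y) z = a *: mul x z + mul y z) /\
  (forall (a : K) (x y z : V), mul x (a *: y + z) = a *: mul x y + mul x z).

Definition natural_family (mul : V -> V -> V) (s : seq V) : Prop :=
  forall i j, (i < size s)%N -> (j < size s)%N -> i != j ->
    mul (nth 0 s i) (nth 0 s j) = 0.

Definition natural_basis (mul : V -> V -> V) (s : seq V) : Prop :=
  basis_of fullv%VS s /\ natural_family mul s.

Definition evolution_algebra (mul : V -> V -> V) : Prop :=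
  bilinear_mul mul /\ exists s, natural_basis mul s.

(** E = E^2 : the only subspace containing all products is E itself
    (E^2 is the subspace spanned by all products). *)
Definition regular (mul : V -> V -> V) : Prop :=
  forall U : {vspace V}, (forall x y, mul x y \in U) -> U = fullv.

Definition subalgebra (mul : V -> V -> V) (U : {vspace V}) : Prop :=
  forall x y, x \in U -> y \in U -> mul x y \in U.

Definition complete (mul : V -> V -> V) : Prop :=
  forall U : {vspace V}, subalgebra mul U ->
    exists s, [/\ basis_of U s, natural_family mul s &
      exists s', natural_basis mul s' /\ {subset s <= s'}].

End EvolutionAlgebras.

(* Fix a natural basis (e_i).  Regularity makes the squares e_i^2 a basis, so
   e_j = \sum_k b_kj e_k^2 with (b_ij) invertible, and u = \sum_i t_i e_i is
   idempotent as soon as t_i^2 = \sum_j b_ij t_j for all i.  Over an algebraically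
   closed field this quadratic system has a solution with two nonzero coordinates.
   A nonzero solution comes from a joint eigenvector of the commuting operators of
   multiplication by x_i on C[x]/(x_i^2 - \sum_j b_ij x_j), realised on square-free
   monomials; invertibility of b makes each x_i a combination of squares, so these
   operators are not all nilpotent.  A solution supported at a single index k forces
   the k-th column of b to vanish off the diagonal, so the system on the remaining
   indices is again invertible and its solution extends by a root of a quadratic.
   The line spanned by u is a subalgebra.  In a natural basis extending a basis of
   it, the other members have zero product with a multiple of u; since the e_i^2 are
   independent, they vanish at the two coordinates p, q where u does not, and
   expanding e_p in that basis gives 1 = 0. *)

From mathcomp Require Import all_boot all_order all_algebra.
From mathcomp Require Import complex reals.
Import GRing.Theory.
Set Implicit Arguments. Unset Strict Implicit. Unset Printing Implicit Defensive.
Local Open Scope ring_scope.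

Lemma mulmx_sumZl (R : comNzRingType) (I : finType) m n p (c : I -> R)
    (X : I -> 'M[R]_(m, n)) (A : 'M_(n, p)) :
  (\sum_k c k *: X k) *m A = \sum_k c k *: (X k *m A).
Proof. by rewrite mulmx_suml; apply: eq_bigr => k _; rewrite scalemxAl. Qed.

Lemma stablemxXn (F : fieldType) m n (U : 'M[F]_(m, n)) (B : 'M_n) k :
  stablemx U B -> stablemx U (B ^+ k).
Proof.
move=> stUB; elim: k => [|k IHk]; first by rewrite expr0 mulmx1.
by rewrite exprS -mulmxE stablemxM.
Qed.

Lemma scalerIf (F : fieldType) (V : lmodType F) (v : V) :
  v != 0 -> injective ( *:%R^~ v : F -> V).
Proof.
move=> v0 a c /eqP; rewrite -subr_eq0 -scalerBl scaler_eq0 (negbTE v0) orbF.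
by rewrite subr_eq0 => /eqP.
Qed.

Section SquareFreeMonomials.
Variables (C : fieldType) (I : finType) (b : I -> I -> C).

Local Notation N := #|{: {set I}}|.
Implicit Types (S T : {set I}) (i j : I).

Definition monomial S : 'rV[C]_N := delta_mx 0 (enum_rank S).

(* [mulX_fuel k i S] is x_i x_S in C[x_i | i : I] / (x_i^2 - \sum_j b i j x_j),
   written in the basis of square-free monomials x_S; the fuel k must exceed #|S|. *)
Fixpoint mulX_fuel k i S : 'rV[C]_N :=
  if k is k'.+1 then
    if i \in S then \sum_j b i j *: mulX_fuel k' j (S :\ i) else monomial (i |: S)
  else 0.

Lemma mulX_fuel_enough k k' i S :
  (#|S| < k)%N -> (#|S| < k')%N -> mulX_fuel k i S = mulX_fuel k' i S.
Proof.
elim: k k' i S => [|k IH] [|k'] i S //= ltSk ltSk'.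
case: ifP => // iS; apply: eq_bigr => j _; congr (_ *: _).
by apply: IH; [move: ltSk | move: ltSk']; rewrite (cardsD1 i S) iS.
Qed.

Definition mulX i S := mulX_fuel #|S|.+1 i S.

Lemma mulX_in i S : i \in S -> mulX i S = \sum_j b i j *: mulX j (S :\ i).
Proof.
move=> iS; rewrite {1}/mulX /= iS; apply: eq_bigr => j _; congr (_ *: _).
by apply: mulX_fuel_enough; rewrite ?(cardsD1 i S) ?iS.
Qed.

Lemma mulX_notin i S : i \notin S -> mulX i S = monomial (i |: S).
Proof. by rewrite /mulX /= => /negbTE ->. Qed.

Definition mxX i : 'M[C]_N := \matrix_(p, q) mulX i (enum_val p) 0 q.

Lemma monomial_mxX S i : monomial S *m mxX i = mulX i S.
Proof. by rewrite /monomial -rowE; apply/rowP => q; rewrite !mxE enum_rankK. Qed.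

Lemma monomial_mxP (A B : 'M[C]_N) :
  (forall S, monomial S *m A = monomial S *m B) -> A = B.
Proof.
move=> eqAB; apply/row_matrixP => p; rewrite !rowE.
by have := eqAB (enum_val p); rewrite /monomial enum_valK.
Qed.

Lemma monomial_neq0 S : monomial S != 0.
Proof.
apply/negP => /eqP/rowP/(_ (enum_rank S)); rewrite !mxE !eqxx /= => /eqP.
by rewrite oner_eq0.
Qed.

Definition mulX_commute S := forall i j, mulX i S *m mxX j = mulX j S *m mxX i.

Lemma mulX_comm_notin S i j : i \notin S -> j \notin S ->
  mulX i S *m mxX j = mulX j S *m mxX i.
Proof.
move=> iS jS; have [->//|ij] := eqVneq i j.
rewrite !mulX_notin // !monomial_mxX.
rewrite mulX_notin; last by rewrite !inE negb_or eq_sym ij.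
rewrite mulX_notin; last by rewrite !inE negb_or ij.
by rewrite setUCA.
Qed.

Section InductionStep.
Variable S : {set I}.
Hypothesis IH : forall T : {set I}, (#|T| < #|S|)%N -> mulX_commute T.

Lemma mulX_comm_in_notin i j : i \in S -> j \notin S ->
  mulX i S *m mxX j = mulX j S *m mxX i.
Proof.
move=> iS jS; have ij : i != j by apply: contraNneq jS => <-.
have ltSi : (#|S :\ i| < #|S|)%N by rewrite (cardsD1 i S) iS.
rewrite mulX_in // mulmx_sumZl mulX_notin // monomial_mxX mulX_in; last first.
  by rewrite !inE iS orbT.
apply: eq_bigr => k _; rewrite IH // mulX_notin; last by rewrite !inE (negbTE jS) andbF.
rewrite monomial_mxX; congr (_ *: mulX k _); apply/setP => x; rewrite !inE.
by case: (eqVneq x j) => // ->; rewrite eq_sym ij.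
Qed.

Lemma mulX_comm_in i j : i \in S -> j \in S ->
  mulX i S *m mxX j = mulX j S *m mxX i.
Proof.
move=> iS jS; have [->//|ij] := eqVneq i j.
have ltSi : (#|S :\ i| < #|S|)%N by rewrite (cardsD1 i S) iS.
have ltSj : (#|S :\ j| < #|S|)%N by rewrite (cardsD1 j S) jS.
have ltSij : (#|S :\ i :\ j| < #|S|)%N.
  by apply: leq_ltn_trans ltSi; apply/subset_leq_card/subD1set.
have setDDC : S :\ j :\ i = S :\ i :\ j.
  by apply/setP => x; rewrite !inE !andbA [(x != j) && _]andbC.
rewrite mulX_in // mulX_in // !mulmx_sumZl.
under eq_bigr => k _ do
  rewrite IH // mulX_in ?inE 1?eq_sym ?ij // mulmx_sumZl scaler_sumr.
under [RHS]eq_bigr => k _ do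
  rewrite IH // mulX_in ?inE ?ij // mulmx_sumZl scaler_sumr.
rewrite [RHS]exchange_big /=; apply: eq_bigr => k _; apply: eq_bigr => l _.
by rewrite !scalerA [b j l * _]mulrC setDDC IH.
Qed.

End InductionStep.

Lemma mulX_comm S : mulX_commute S.
Proof.
have [n] := ubnP #|S|; elim: n S => // n IHn S ltSn i j.
have IH T : (#|T| < #|S|)%N -> mulX_commute T.
  by move=> ltTS; apply: IHn; apply: leq_trans ltTS _.
have [iS|iS] := boolP (i \in S); have [jS|jS] := boolP (j \in S).
- exact: mulX_comm_in.
- exact: mulX_comm_in_notin.
- by symmetry; apply: mulX_comm_in_notin.
- exact: mulX_comm_notin.
Qed.

Lemma mxX_comm i j : mxX i *m mxX j = mxX j *m mxX i.
Proof. by apply: monomial_mxP => S; rewrite !mulmxA !monomial_mxX mulX_comm. Qed.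

Lemma mxX_sqr i : mxX i *m mxX i = \sum_j b i j *: mxX j.
Proof.
apply: monomial_mxP => S; rewrite mulmxA monomial_mxX mulmx_sumr.
under [RHS]eq_bigr => j _ do rewrite -scalemxAr monomial_mxX.
have [iS|iS] := boolP (i \in S).
- rewrite mulX_in // mulmx_sumZl; apply: eq_bigr => j _; congr (_ *: _).
  by rewrite mulX_comm mulX_notin ?setD11 // -monomial_mxX setD1K.
- rewrite mulX_notin // monomial_mxX mulX_in ?setU11 //.
  apply: eq_bigr => j _; congr (_ *: mulX j _); apply/setP => x; rewrite !inE.
  by case: (eqVneq x i) => // ->; rewrite (negbTE iS).
Qed.

Lemma mxX_neq0 i : mxX i != 0.
Proof.
apply: contraNneq (monomial_neq0 [set i]) => Xi0.
by rewrite -[[set i]]setU0 -mulX_notin ?inE // -monomial_mxX Xi0 mulmx0.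
Qed.

End SquareFreeMonomials.

Section CommutingNilpotent.
Variables (F : fieldType) (n : nat) (I : finType) (A : I -> 'M[F]_n).
Hypothesis A_comm : forall i j, A i *m A j = A j *m A i.
Hypothesis A_nil : forall i, exists r, A i ^+ r = 0.

(* Peel off one A_i at a time: W <= W A_i^k + U for all k, and A_i^r = 0. *)
Lemma nil_stable_sub_sum_eq0 (W : 'M_n) (s : seq I) :
  (forall j, stablemx W (A j)) -> (W <= \sum_(j <- s) W *m A j)%MS -> W = 0.
Proof.
move=> stW; elim: s => [|i s IHs] subW.
  by apply/eqP; rewrite big_nil submx0 in subW.
rewrite big_cons in subW; set U := (\sum_(j <- s) W *m A j)%MS in subW.
have stU : stablemx U (A i).
  rewrite /U; elim: s {IHs subW U} => [|j s IHs]; first by rewrite big_nil mul0mx.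
  rewrite big_cons addsmxMr addsmxS // -mulmxA -A_comm mulmxA submxMr //.
have subWk k : (W <= W *m A i ^+ k + U)%MS.
  elim: k => [|k IHk]; first by rewrite expr0 mulmx1 addsmxSl.
  apply: submx_trans IHk _; rewrite addsmx_sub addsmxSr andbT.
  apply: submx_trans (submxMr (A i ^+ k) subW) _.
  rewrite addsmxMr -mulmxA mulmxE -exprS -mulmxE addsmxS //.
  exact: stablemxXn.
apply: IHs; have [r Ar0] := A_nil i.
by have := subWk r; rewrite Ar0 mulmx0 adds0mx.
Qed.

Lemma comm_nil_sub_sum_sqr_eq0 :
  (forall i, (A i <= \sum_j A j *m A j)%MS) -> forall i, A i = 0.
Proof.
move=> subA i; set W := (\sum_j A j)%MS.
have stW j : stablemx W (A j).
  rewrite sumsmxMr; apply/sumsmx_subP => k _; rewrite -A_comm.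
  exact: submx_trans (submxMl _ _) (sumsmx_sup k _ _).
have subW : (W <= \sum_(j <- enum I) W *m A j)%MS.
  rewrite big_enum /=; apply/sumsmx_subP => k _; apply: submx_trans (subA k) _.
  apply/sumsmx_subP => j _; apply: (sumsmx_sup j) => //.
  exact/submxMr/(sumsmx_sup j).
apply/eqP; rewrite -submx0 -(nil_stable_sub_sum_eq0 stW subW).
exact: sumsmx_sup.
Qed.

End CommutingNilpotent.

Lemma eigenvalue_neq0_of_expn_neq0 (C : closedFieldType) n (A : 'M[C]_n) :
  A ^+ n != 0 -> exists2 mu, mu != 0 & eigenvalue A mu.
Proof.
case: n A => [|n] A An0; first by rewrite [_ ^+ _]flatmx0 eqxx in An0.
have [r charA] := closed_field_poly_normal (char_poly A).
rewrite (monicP (char_poly_monic A)) scale1r in charA.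
have sz_r : size r = n.+1.
  by apply: succn_inj; rewrite -(size_char_poly A) charA size_prod_XsubC.
have [r0|/allPn[mu rmu mu0]] := boolP (all (eq_op^~ 0) r); last first.
  by exists mu; rewrite // eigenvalue_root_char charA root_prod_XsubC.
have charXn : char_poly A = 'X ^+ n.+1.
  rewrite charA -sz_r (eq_big_seq (fun=> 'X)).
    by rewrite big_const_seq count_predT -Monoid.iteropE.
  by move=> z /(allP r0)/eqP ->; rewrite subr0.
have := Cayley_Hamilton A; rewrite charXn rmorphXn /= horner_mx_X => An_eq0.
by rewrite An_eq0 eqxx in An0.
Qed.

Lemma comm_joint_eigenvector (C : numClosedFieldType) n (I : finType)
    (A : I -> 'M[C]_n) i mu :
  (forall i j, A i *m A j = A j *m A i) -> eigenvalue (A i) mu ->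
  exists2 t : I -> C, t i = mu &
    exists2 v : 'rV_n, v != 0 & forall j, v *m A j = t j *: v.
Proof.
move=> A_comm eig_mu; set W := eigenspace (A i) mu.
have rkW : (0 < \rank W)%N by rewrite lt0n mxrank_eq0.
have stW j : stablemx W (A j) by apply: comm_mx_stable_eigenspace; apply: A_comm.
set As := [seq restrictmx W (A j) | j <- enum I].
have As_comm : {in As &, forall X Y, comm_mx X Y}.
  move=> _ _ /mapP[j _ ->] /mapP[k _ ->].
  by rewrite /comm_mx -!conjmxM ?inE ?stablemx_row_base ?stW // A_comm.
have [w w0 stw] := common_eigenvector rkW As_comm.
set v := w *m row_base W.
have v0 : v != 0 by rewrite mulmx_free_eq0 ?row_base_free.
have v_eigen j : exists a, v *m A j = a *: v.
  apply/sub_rVP; rewrite -stablemx_restrict ?stW //.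
  by apply: (allP stw); apply: map_f; rewrite mem_enum.
have [t vt] := fin_all_exists v_eigen.
exists t; last by exists v.
have /eigenspaceP vW : (v <= W)%MS by rewrite -(eq_row_base W) submxMl.
by apply: (scalerIf v0); rewrite -vt.
Qed.

Definition sqr_system_sol (R : nzRingType) (I : finType)
    (b : I -> I -> R) (t : I -> R) :=
  forall i, t i ^+ 2 = \sum_j b i j * t j.

Lemma joint_eigenvalue_sqr_system (F : fieldType) n (I : finType)
    (A : I -> 'M[F]_n) (b : I -> I -> F) (t : I -> F) (v : 'rV_n) :
  v != 0 -> (forall i, A i *m A i = \sum_j b i j *: A j) ->
  (forall j, v *m A j = t j *: v) -> sqr_system_sol b t.
Proof.
move=> v0 A_sqr vA i; apply: (scalerIf v0) => /=.
have -> : t i ^+ 2 *: v = v *m (A i *m A i).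
  by rewrite mulmxA vA -scalemxAl vA scalerA expr2.
rewrite A_sqr mulmx_sumr scaler_suml; apply: eq_bigr => k _.
by rewrite -scalemxAr vA scalerA.
Qed.

Lemma sqr_system_nonzero_sol (C : numClosedFieldType) (I : finType)
    (b beta : I -> I -> C) :
  (forall i l, \sum_j beta i j * b j l = (i == l)%:R) -> I ->
  exists2 t : I -> C, sqr_system_sol b t & exists i, t i != 0.
Proof.
move=> beta_b i0; pose A := mxX b.
have A_sqr_comb i : A i = \sum_j beta i j *: (A j *m A j).
  transitivity (\sum_l (\sum_j beta i j * b j l) *: A l).
    rewrite (bigD1 i) //= beta_b eqxx scale1r big1 ?addr0 // => l li.
    by rewrite beta_b eq_sym (negbTE li) scale0r.
  under eq_bigr do rewrite scaler_suml.
  rewrite exchange_big /=; apply: eq_bigr => j _.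
  by rewrite mxX_sqr scaler_sumr; apply: eq_bigr => l _; rewrite scalerA.
have [/existsP[i Ai]|] := boolP [exists i, A i ^+ #|{: {set I}}| != 0].
  have [mu mu0 eig_mu] := eigenvalue_neq0_of_expn_neq0 Ai.
  have [t ti [v v0 vA]] := comm_joint_eigenvector (mxX_comm b) eig_mu.
  exists t; first exact: joint_eigenvalue_sqr_system v0 (mxX_sqr b) vA.
  by exists i; rewrite ti.
rewrite negb_exists => /forallP A_nil.
have A_nil' i : exists r, A i ^+ r = 0 by exists #|{: {set I}}|; apply/eqP/negbNE.
have A_sub i : (A i <= \sum_j A j *m A j)%MS.
  rewrite [X in (X <= _)%MS]A_sqr_comb; apply: summx_sub => j _.
  exact/scalemx_sub/(sumsmx_sup j).
have /eqP := comm_nil_sub_sum_sqr_eq0 (mxX_comm b) A_nil' A_sub i0.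
by rewrite (negbTE (mxX_neq0 b i0)).
Qed.

Lemma quadratic_nonzero_root (C : closedFieldType) (a c : C) :
  a != 0 -> exists2 x, x != 0 & x ^+ 2 = a * x + c.
Proof.
move=> a0; have [->|c0] := eqVneq c 0; first by exists a; rewrite ?addr0 ?expr2.
have [x xE] := @solve_monicpoly C 2 (nth 0 [:: c; a]) isT.
rewrite !big_ord_recl big_ord0 /= expr0 expr1 mulr1 addr0 addrC in xE.
exists x => //; apply: contra_neq c0 => x0.
by move: xE; rewrite x0 expr2 !mul0r mulr0 add0r.
Qed.

Lemma bigD1_sub (V : nmodType) (I : finType) (k : I) (F : I -> V) :
  \sum_j F j = F k + \sum_(y : {j in predC1 k}) F (val y).
Proof. by rewrite (bigD1 k) //= (big_sub (predC1 k)). Qed.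

Lemma sqr_system_sol_supp1 (R : idomainType) (I : finType) (b : I -> I -> R) t k :
  sqr_system_sol b t -> t k != 0 -> (forall j, j != k -> t j = 0) ->
  b k k = t k /\ forall j, j != k -> b j k = 0.
Proof.
move=> tsol tk t_k.
have sum_bt i : \sum_j b i j * t j = b i k * t k.
  by rewrite (bigD1 k) //= big1 ?addr0 // => j /t_k ->; rewrite mulr0.
split; first by apply: (mulIf tk); rewrite -sum_bt -tsol expr2.
move=> j jk; have /esym/eqP := tsol j.
by rewrite sum_bt (t_k j jk) expr2 mulr0 mulf_eq0 (negbTE tk) orbF => /eqP.
Qed.

Section ExtendSolution.
Variables (C : closedFieldType) (I : finType) (b : I -> I -> C) (k : I).
Hypotheses (bkk : b k k != 0) (b_k : forall j, j != k -> b j k = 0).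

Lemma sqr_system_sol_extend (t' : {j in predC1 k} -> C) :
  sqr_system_sol (fun x y => b (val x) (val y)) t' ->
  exists2 t, sqr_system_sol b t & t k != 0 /\ forall y, t (val y) = t' y.
Proof.
move=> t'sol; set c := \sum_y b k (val y) * t' y.
have [x x0 xE] := quadratic_nonzero_root c bkk.
pose t j := if insub j is Some y then t' y else x.
have tk : t k = x by rewrite /t insubF // inE eqxx.
have tval y : t (val y) = t' y by rewrite /t valK.
have sum_bt i : \sum_j b i j * t j = b i k * x + \sum_y b i (val y) * t' y.
  by rewrite (bigD1_sub k) tk; under eq_bigr do rewrite tval.
exists t; last by rewrite tk.
move=> i; rewrite sum_bt; have [->|ik] := eqVneq i k; first by rewrite tk.
rewrite b_k // mul0r add0r; pose y : {j in predC1 k} := Sub i ik.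
have -> : i = val y by rewrite SubK.
by rewrite tval t'sol.
Qed.

End ExtendSolution.

Lemma sqr_system_sol_two_supp (C : numClosedFieldType) (I : finType)
    (b beta : I -> I -> C) :
  (forall i l, \sum_j beta i j * b j l = (i == l)%:R) -> (1 < #|I|)%N ->
  exists2 t, sqr_system_sol b t & exists p q, [/\ p != q, t p != 0 & t q != 0].
Proof.
move=> beta_b cardI; have [i0 _] : exists i0 : I, i0 \in I by apply/card_gt0P/ltnW.
have [t tsol [k tk]] := sqr_system_nonzero_sol beta_b i0.
have [/existsP[p /existsP[q /and3P[pq tp tq]]]|] :=
  boolP [exists p, exists q, [&& p != q, t p != 0 & t q != 0]].
  by exists t => //; exists p, q.
rewrite negb_exists => /forallP no_two.
have t_k j : j != k -> t j = 0.
  move=> jk; apply/eqP; apply: contraNT (no_two j) => tj.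
  by apply/existsP; exists k; rewrite jk tj tk.
have [bkk b_k] := sqr_system_sol_supp1 tsol tk t_k.
have bkk0 : b k k != 0 by rewrite bkk.
have beta_k i : i != k -> beta i k = 0.
  move=> ik; have /eqP := beta_b i k; rewrite (negbTE ik) (bigD1 k) //= big1.
    by rewrite addr0 mulf_eq0 (negbTE bkk0) orbF => /eqP.
  by move=> j /b_k ->; rewrite mulr0.
have [j jk] : exists j, j \in predC1 k.
  by apply/card_gt0P; rewrite cardC1 -subn1 subn_gt0.
have beta_b' (x z : {j in predC1 k}) :
    \sum_(y : {j in predC1 k}) beta (val x) (val y) * b (val y) (val z) = (x == z)%:R.
  have := beta_b (val x) (val z).
  by rewrite (bigD1_sub k) (beta_k _ (valP x)) mul0r add0r (inj_eq val_inj).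
have [t' t'sol [y0 t'y0]] := sqr_system_nonzero_sol beta_b' (Sub j jk).
have [t2 t2sol [t2k t2val]] := sqr_system_sol_extend bkk0 b_k t'sol.
exists t2 => //; exists k, (val y0); split; rewrite ?t2val //.
by rewrite eq_sym; apply: (valP y0).
Qed.

Section BilinearProduct.
Variables (K : fieldType) (V : vectType K) (mul : V -> V -> V).
Hypothesis mul_bilinear : bilinear_mul mul.

Lemma bmul0l z : mul 0 z = 0.
Proof.
have := mul_bilinear.1 1 0 0 z; rewrite scaler0 addr0 scale1r => h.
by apply: (addrI (mul 0 z)); rewrite addr0 -h.
Qed.

Lemma bmul0r z : mul z 0 = 0.
Proof.
have := mul_bilinear.2 1 z 0 0; rewrite scaler0 addr0 scale1r => h.
by apply: (addrI (mul z 0)); rewrite addr0 -h.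
Qed.

Lemma bmulDl x y z : mul (x + y) z = mul x z + mul y z.
Proof. by have := mul_bilinear.1 1 x y z; rewrite !scale1r. Qed.

Lemma bmulDr x y z : mul z (x + y) = mul z x + mul z y.
Proof. by have := mul_bilinear.2 1 z x y; rewrite !scale1r. Qed.

Lemma bmulZl a x z : mul (a *: x) z = a *: mul x z.
Proof. by have := mul_bilinear.1 a x 0 z; rewrite addr0 bmul0l addr0. Qed.

Lemma bmulZr a x z : mul z (a *: x) = a *: mul z x.
Proof. by have := mul_bilinear.2 a z x 0; rewrite addr0 bmul0r addr0. Qed.

Lemma bmul_suml (J : finType) (F : J -> V) z :
  mul (\sum_j F j) z = \sum_j mul (F j) z.
Proof. exact: (big_morph (mul^~ z) (fun x y => bmulDl x y z) (bmul0l z)). Qed.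

Lemma bmul_sumr (J : finType) (F : J -> V) z :
  mul z (\sum_j F j) = \sum_j mul z (F j).
Proof. exact: (big_morph (mul z) (fun x y => bmulDr x y z) (bmul0r z)). Qed.

Lemma subalgebra_line u : mul u u = u -> subalgebra mul <[u]>%VS.
Proof.
move=> uu _ _ /vlineP[a ->] /vlineP[c ->].
by rewrite bmulZl bmulZr uu scalerA memvZ ?memv_line.
Qed.

Section NaturalBasis.
Variables (n : nat) (e : n.-tuple V).
Hypotheses (e_basis : basis_of fullv e) (e_natural : natural_family mul e).

Definition sqr_tuple : n.-tuple V := [tuple mul e`_k e`_k | k < n].

Lemma sqr_tupleE (k : 'I_n) : sqr_tuple`_k = mul e`_k e`_k.
Proof. by rewrite -(tnth_nth 0) tnth_mktuple. Qed.

Lemma mul_coordE x y :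
  mul x y = \sum_k (coord e k x * coord e k y) *: sqr_tuple`_k.
Proof.
rewrite {1}(coord_basis e_basis (memvf x)) {1}(coord_basis e_basis (memvf y)).
rewrite bmul_suml; apply: eq_bigr => i _.
rewrite bmulZl bmul_sumr (bigD1 i) //= big1 ?addr0 => [|j ji].
  by rewrite bmulZr scalerA sqr_tupleE.
by rewrite bmulZr e_natural ?scaler0 ?size_tuple //; rewrite eq_sym in ji.
Qed.

Lemma regular_sqr_basis : regular mul -> basis_of fullv sqr_tuple.
Proof.
move=> reg; rewrite basisEdim size_tuple (size_basis e_basis) leqnn andbT.
rewrite (reg <<sqr_tuple>>%VS) // => x y; rewrite mul_coordE.
by apply: memv_suml => k _; apply/memvZ/memv_span/mem_nth; rewrite size_tuple.
Qed.

Hypothesis sqr_free : free sqr_tuple.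

Lemma mul_eq0_coord x y k : mul x y = 0 -> coord e k x * coord e k y = 0.
Proof. by rewrite mul_coordE => /freeP; apply. Qed.

(* In the expansion of e_p over s, only x can contribute to both coordinates p and q. *)
Lemma natural_basis_coord_eq0 (s : seq V) x p q : natural_basis mul s -> x \in s ->
  p != q -> coord e p x != 0 -> coord e q x = 0.
Proof.
move=> [s_basis s_nat] xs pq xp; apply/eqP/negPn/negP => xq.
have i0_lt : (index x s < size s)%N by rewrite index_mem.
pose i0 := Ordinal i0_lt; have s_i0 : s`_i0 = x by apply: nth_index.
have other_pq (j : 'I_(size s)) : j != i0 ->
    coord e p s`_j = 0 /\ coord e q s`_j = 0.
  move=> ji0; have x_sj : mul x s`_j = 0 by rewrite -s_i0 s_nat // eq_sym.
  have /eqP := mul_eq0_coord p x_sj; have /eqP := mul_eq0_coord q x_sj.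
  by rewrite !mulf_eq0 (negbTE xp) (negbTE xq) => /eqP-> /eqP->.
pose g := coord (in_tuple s) i0 e`_p.
have coord_ep r : (forall j : 'I_(size s), j != i0 -> coord e r s`_j = 0) ->
    coord e r e`_p = g * coord e r x.
  move=> r0; rewrite {1}(coord_basis (X := in_tuple s) s_basis (memvf e`_p)).
  rewrite linear_sum (bigD1 i0) //= big1 ?addr0 => [|j /r0 sj0].
    by rewrite linearZ /= s_i0.
  by rewrite linearZ /= sj0 mulr0.
have e_free := basis_free e_basis.
have /esym/eqP := coord_ep q (fun j ji0 => (other_pq j ji0).2).
rewrite coord_free // (negbTE pq) mulf_eq0 (negbTE xq) orbF => /eqP g0.
have := coord_ep p (fun j ji0 => (other_pq j ji0).1).
by rewrite coord_free // eqxx g0 mul0r => /eqP; rewrite oner_eq0.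
Qed.

End NaturalBasis.
End BilinearProduct.

Lemma exists_idempotent_two_supp (K : numClosedFieldType) (V : vectType K)
    (mul : V -> V -> V) n (e : n.-tuple V) :
  bilinear_mul mul -> basis_of fullv e -> natural_family mul e -> regular mul ->
  (1 < n)%N ->
  exists2 u, mul u u = u & exists p q, [/\ p != q, coord e p u != 0 & coord e q u != 0].
Proof.
move=> bil e_basis e_nat reg n_gt1.
have sqr_basis := regular_sqr_basis bil e_basis e_nat reg.
pose b (k j : 'I_n) := coord (sqr_tuple mul e) k e`_j.
pose beta (i j : 'I_n) := coord e i (sqr_tuple mul e)`_j.
have beta_b i l : \sum_j beta i j * b j l = (i == l)%:R.
  rewrite eq_sym -(coord_free l i (basis_free e_basis)).
  rewrite [in RHS](coord_basis sqr_basis (memvf e`_l)) linear_sum.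
  by apply: eq_bigr => j _; rewrite linearZ /= mulrC.
have card_gt1 : (1 < #|'I_n|)%N by rewrite card_ord.
have [t tsol [p [q [pq tp tq]]]] := sqr_system_sol_two_supp beta_b card_gt1.
pose u := \sum_j t j *: e`_j.
have coord_u k : coord e k u = t k by apply: coord_sum_free (basis_free e_basis).
exists u; last by exists p, q; rewrite !coord_u.
rewrite (mul_coordE bil e_basis e_nat).
under eq_bigr => k _ do rewrite !coord_u -expr2 tsol scaler_suml.
rewrite exchange_big /=; apply: eq_bigr => j _.
rewrite [in RHS](coord_basis sqr_basis (memvf e`_j)) scaler_sumr.
by apply: eq_bigr => k _; rewrite scalerA mulrC.
Qed.

Theorem regular_evolution_algebra_not_complete (K : numClosedFieldType) (V : vectType K)
    (mul : V -> V -> V) :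
  (1 < \dim (@fullv _ V))%N -> evolution_algebra mul -> regular mul -> ~ complete mul.
Proof.
move=> dimV [bil [s [s_basis s_nat]]] reg compl; pose e := in_tuple s.
have sqr_free := basis_free (regular_sqr_basis bil (e := e) s_basis s_nat reg).
have size_gt1 : (1 < size s)%N by rewrite -(size_basis (X := e) s_basis).
have [u uu [p [q [pq up uq]]]] :=
  exists_idempotent_two_supp bil (e := e) s_basis s_nat reg size_gt1.
have u0 : u != 0 by apply: contraNneq up => ->; rewrite linear0.
have [s0 [s0_basis _ [s' [s'_natural s0s']]]] := compl _ (subalgebra_line bil uu).
have x_s0 : s0`_0 \in s0.
  by apply: mem_nth; rewrite -(size_basis (X := in_tuple s0) s0_basis) dim_vline u0.
have /vlineP[a xa] := basis_mem s0_basis x_s0.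
have a0 : a != 0.
  by apply: contraNneq (basis_not0 s0_basis x_s0) => a0; rewrite xa a0 scale0r.
have := natural_basis_coord_eq0 bil (e := e) s_basis s_nat sqr_free s'_natural.
move/(_ _ p q (s0s' _ x_s0) pq); rewrite xa !linearZ /= => /(_ (mulf_neq0 a0 up)).
move/eqP.
by rewrite mulf_eq0 (negbTE a0) (negbTE uq).
Qed.

Theorem theorem3p2 (R : realType) (V : vectType R[i]) (mul : V -> V -> V) :
  (1 < \dim (@fullv _ V))%N ->
  evolution_algebra mul -> regular mul -> ~ complete mul.
Proof. exact: regular_evolution_algebra_not_complete. Qed.
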